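(* Let $D$ be the diamond graph with $V=\{1,2,3,4\}$ and $E=\{\{1,2\},\{1,3\},\{2,3\},\{2,4\},\{3,4\}\}$, and let $\mathcal{Q}_{\mathrm{Gre}}(D)=\{q\in\mathbb{N}^4:q_iq_j=0\text{ for all }\{i,j\}\in E\}$. For $q=(q_1,q_2,q_3,q_4)$ let $\langle q\rangle=(q_1+q_4,q_2,q_3)$, and let $\langle i\rangle=i$ for $i\in\{1,2,3,\bot\}$ and $\langle4\rangle=1$. Let $\Phi_{\mathrm{Gre}}(K_3)$ be the deterministic size-based policy on the complete graph $K_3$ with nodes $\{1,2,3\}$ given by $\Phi_{\mathrm{Gre}}(K_3)(q,i)=j$ if $q_j\ge1$ for some $j\ne i$ and $\bot$ otherwise. Every greedy policy $\Phi$ adapted to $D$ satisfies: (i) if $\Phi$ is deterministic size-based, then $\langle\Phi(q,i)\rangle=\Phi_{\mathrm{Gre}}(K_3)(\langle q\rangle,\langle i\rangle)$ for all $(q,i)\in\mathcal{Q}_{\mathrm{Gre}}(D)\times V$; (ii) in general, if $\Phi$ has state space $(\mathcal{S},|\cdot|)$, then $\sum_{s'\in\mathcal{S}}\sum_{j\in V\cup\{\bot\}:\ \langle j\rangle=\Phi_{\mathrm{Gre}}(K_3)(\langle|s|\rangle,\langle i\rangle)}\Phi(s,i,j,s')=1$ for all $s\in\mathcal{S}$, $i\in V$; (iii) for every sequence $I=(I_t)$ of item classes, $\langle Q_t\rangle=(Q_{\mathrm{Gre}})_t$ for all $t\in\mathbb{N}$, where $Q$ and $Q_{\mathrm{Gre}}$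 are the queue-size processes of the models $(D,I,\Phi)$ and $(K_3,\langle I\rangle,\Phi_{\mathrm{Gre}}(K_3))$, with $\langle I\rangle=(\langle I_t\rangle)_t$.
   Context: Matching dynamics: items of classes $I_0,I_1,\dots$ arrive one at a time; a class-$i$ item can be matched with an unmatched class-$j$ item iff $\{i,j\}$ is an edge; matched items leave; the system starts empty. A (general) policy adapted to a graph: countable state space $\mathcal{S}$, map $|\cdot|:\mathcal{S}\to\mathbb{N}^n$ (unmatched items per class) with unique empty state $\varnothing$, and $\Phi(s,i,j,s')\in[0,1]$, the probability that an arriving class-$i$ item finding state $s$ is matched with class $j$ ($j=\bot$: left unmatched) and the new state is $s'$; $\Phi(s,i,j,s')>0$ only if $j\in\{j'\in V_i:|s|_{j'}\ge1\}\cup\{\bot\}$ ($V_i$ the neighbours of $i$) and $|s'|=|s|+\mathbf{1}_i$ if $j=\bot$, $|s|-\mathbf{1}_j$ otherwise; irreducible state chain from $\varnothing$. Deterministic size-based: $\mathcal{S}\subseteq\mathbb{N}^n$, $|\cdot|$ the identity, and the decision is a function $\Phi(q,i)\in V\cup\{\bot\}$. Greedy: no arriving item is left unmatched while a compatible item is waiting (so queue-size vectors lie in $\mathcal{Q}_{\mathrm{Gre}}$). Queue-size process: $Q_t=|S_t|$ after the first $t$ arrivals. *)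

From HB Require Import structures.
From mathcomp Require Import all_boot all_order all_algebra.
From mathcomp Require Import boolp classical_sets reals constructive_ereal ereal esum.
From Stdlib Require Import Relations.
Set Implicit Arguments.
Unset Strict Implicit.
Unset Printing Implicit Defensive.
Import Order.TTheory GRing.Theory Num.Theory.

Local Open Scope ring_scope.

(* relation [adj].  The "unmatched" decision bot is [None : option _]. *)

Definition qvec (n : nat) := {ffun 'I_n -> nat}.

Definition qzero (n : nat) : qvec n := [ffun => 0%N].

Definition qupd (n : nat) (q : qvec n) (i : 'I_n) (j : option 'I_n) : qvec n :=
  match j with
  | None => [ffun k => (q k + (k == i))%N]
  | Some j' => [ffun k => (q k - (k == j'))%N]
  end.

Definition greedy_qvec (n : nat) (adj : rel 'I_n) (q : qvec n) : Prop :=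
  forall i j, adj i j -> (q i * q j = 0)%N.

(* A general policy is given by a countable state space S, a size map
   size : S -> N^n, an empty state, and
   Phi s i j s' = probability that a class-i arrival in state s is matched
   with j (None = left unmatched) and the new state is s'. *)

Definition pstep (R : realType) (n : nat) (S : countType)
  (Phi : S -> 'I_n -> option 'I_n -> S -> R) (s s' : S) : Prop :=
  exists i j, 0 < Phi s i j s'.

Definition adapted (R : realType) (n : nat) (adj : rel 'I_n) (S : countType)
  (size : S -> qvec n) (empty : S)
  (Phi : S -> 'I_n -> option 'I_n -> S -> R) : Prop :=
  [/\
      (forall s i j s', 0 <= Phi s i j s' <= 1),
      (forall s i,
         (\esum_(s' in [set: S]) ((\sum_(j : option 'I_n) Phi s i j s')%:E))%E
         = 1%E),
      (forall s i j s', 0 < Phi s i j s' ->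
         match j with
         | None => True
         | Some j' => adj i j' && (0 < size s j')%N
         end /\ size s' = qupd (size s) i j),
      (size empty = qzero n /\ forall s, size s = qzero n -> s = empty)
    &
      (forall s s', clos_refl_trans S (pstep Phi) s s')].

Definition greedy (R : realType) (n : nat) (adj : rel 'I_n) (S : countType)
  (size : S -> qvec n) (Phi : S -> 'I_n -> option 'I_n -> S -> R) : Prop :=
  forall s i s', 0 < Phi s i None s' -> forall j, adj i j -> size s j = 0%N.

(* Phi is deterministic size-based with decision function phi:
   states are identified with their queue-size vectors (size injective,
   i.e. S is a subset of N^n and |.| the identity) and the arrival of class i
   in state q deterministically leads to decision phi q i. *)
Definition det_size_based (R : realType) (n : nat) (S : countType)
  (size : S -> qvec n) (Phi : S -> 'I_n -> option 'I_n -> S -> R)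
  (phi : qvec n -> 'I_n -> option 'I_n) : Prop :=
  injective size /\
  forall s i j s',
    Phi s i j s' =
      (if (j == phi (size s) i) && (size s' == qupd (size s) i j) then 1 else 0).

Fixpoint qdet (n : nat) (phi : qvec n -> 'I_n -> option 'I_n)
  (I : nat -> 'I_n) (t : nat) : qvec n :=
  match t with
  | 0 => qzero n
  | t'.+1 => let q := qdet phi I t' in qupd q (I t') (phi q (I t'))
  end.

(* Paper node k (k = 1..4) is the ordinal k-1.                         *)

Definition adjD : rel 'I_4 := fun i j =>
  ((minn i j, maxn i j) \in [:: (0,1); (0,2); (1,2); (1,3); (2,3)]%N).

Definition adjK3 : rel 'I_3 := fun i j => i != j.

Definition projq (q : qvec 4) : qvec 3 :=
  [ffun k : 'I_3 =>
     (q (widen_ord (leqnSn 3) k) + (if k == ord0 then q (inord 3) else 0))%N].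

Definition projnode (i : 'I_4) : 'I_3 :=
  if (i : nat) == 3%N then ord0 else inord i.

Definition projdec (j : option 'I_4) : option 'I_3 := omap projnode j.

Definition phiGreK3 (q : qvec 3) (i : 'I_3) : option 'I_3 :=
  [pick j | (j != i) && (0 < q j)%N].

From HB Require Import structures.
From mathcomp Require Import all_boot all_order all_algebra.
From mathcomp Require Import boolp classical_sets reals constructive_ereal ereal esum.
From Stdlib Require Import Relations.
Set Implicit Arguments.
Unset Strict Implicit.
Unset Printing Implicit Defensive.
Import Order.TTheory GRing.Theory Num.Theory.
Local Open Scope ring_scope.

(* The diamond is the complete multipartite graph with parts {1,4}, {2}, {3}:
   two nodes are adjacent iff their images under <.> differ, and <.> is the
   quotient map onto the complete graph K_3 of the parts.  Under a greedy
   policy the support of every queue vector lies in a single part, so <q> has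
   at most one nonempty class.  Hence a class-i arrival is matched with a
   class-j item exactly when <q> has a nonempty class other than <i>, and that
   class is <j>: this is the decision of the greedy policy on K_3, and <.>
   commutes with the queue update.  Item (i) also needs every greedy queue
   vector to be the size of some state, which holds because waiting items can
   be added back one at a time. *)

Definition greedy_decision (n : nat) (adj : rel 'I_n) (q : qvec n) (i : 'I_n)
    (j : option 'I_n) : Prop :=
  if j is Some k then adj i k && (0 < q k)%N else forall k, adj i k -> q k = 0%N.

Section GreedyPolicy.

Variables (R : realType) (n : nat) (adj : rel 'I_n) (S : countType).
Variables (size : S -> qvec n) (empty : S) (Phi : S -> 'I_n -> option 'I_n -> S -> R).
Hypotheses (adaptedPhi : adapted adj size empty Phi) (greedyPhi : greedy adj size Phi).
Hypotheses (adj_sym : ssrbool.symmetric adj) (adj_irr : ssrbool.irreflexive adj).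

Lemma Phi_ge0 s i j s' : 0 <= Phi s i j s'.
Proof. by have [Phi01 _ _ _ _] := adaptedPhi; case/andP: (Phi01 s i j s'). Qed.

Lemma Phi_eq0 s i j s' : (Phi s i j s' == 0) = ~~ (0 < Phi s i j s').
Proof. by rewrite lt0r Phi_ge0 andbT negbK. Qed.

Lemma Phi_gt0_decision s i j s' : 0 < Phi s i j s' ->
  greedy_decision adj (size s) i j /\ size s' = qupd (size s) i j.
Proof.
have [_ _ support _ _] := adaptedPhi; move=> pos.
have [feasible ->] := support s i j s' pos; split=> //.
by case: j pos feasible => // pos _; apply: greedyPhi pos.
Qed.

Lemma exists_Phi_gt0 s i : exists j s', 0 < Phi s i j s'.
Proof.
have [//|none] := pselect (exists j s', 0 < Phi s i j s').
have [_ sum1 _ _ _] := adaptedPhi.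
suff: (\esum_(s' in [set: S]) (\sum_j Phi s i j s')%:E)%E = 0%E.
  by rewrite sum1 => -[] /eqP; rewrite oner_eq0.
apply: esum1 => s' _; rewrite big1 // => j _; apply/eqP.
by rewrite Phi_eq0; apply/negP => pos; apply: none; exists j, s'.
Qed.

Lemma greedy_qvec_qupd_Some q i j :
  greedy_qvec adj q -> greedy_qvec adj (qupd q i (Some j)).
Proof.
move=> G x y xy; rewrite !ffunE.
by have /eqP := G x y xy; rewrite muln_eq0 => /orP[]/eqP->; rewrite sub0n ?mul0n ?muln0.
Qed.

Lemma greedy_qvec_qupd q i j : greedy_qvec adj q -> greedy_decision adj q i j ->
  greedy_qvec adj (qupd q i j).
Proof.
case: j => [j G _|G none x y]; first exact: greedy_qvec_qupd_Some.
rewrite !ffunE; case: (eqVneq x i) => [->|xi]; case: (eqVneq y i) => [->|yi] xy.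
- by rewrite adj_irr in xy.
- by rewrite (none y xy) muln0.
- by rewrite adj_sym in xy; rewrite (none x xy) mul0n.
- by rewrite !addn0 G.
Qed.

Lemma greedy_qvec_size s : greedy_qvec adj (size s).
Proof.
have [_ _ _ [size_empty _] irreducible] := adaptedPhi.
have: greedy_qvec adj (size empty) by move=> x y _; rewrite size_empty /qzero !ffunE.
elim: (irreducible empty s) => // [s1 s2 [i [j pos]] | s1 s2 s3 _ IH12 _ IH23].
- by have [decision ->] := Phi_gt0_decision pos; move/greedy_qvec_qupd; apply.
- by move/IH12/IH23.
Qed.

(* Induction on the number of waiting items: a class-k arrival to the vector
   with one class-k item removed has no compatible partner, so it must wait. *)
Lemma greedy_qvec_is_size q : greedy_qvec adj q -> exists s, size s = q.
Proof.
have [_ _ _ [size_empty _] _] := adaptedPhi.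
have [N] := ubnP (\sum_k q k)%N; elim: N q => // N IH q; rewrite ltnS => qN G.
have [k qk|q0] := pickP (fun k => 0 < q k)%N; last first.
  exists empty; rewrite size_empty; apply/ffunP => k; rewrite /qzero ffunE.
  by apply/esym/eqP; rewrite -leqn0 leqNgt q0.
have [s size_s] : exists s, size s = qupd q k (Some k).
  apply: IH; last exact: greedy_qvec_qupd_Some.
  apply: leq_trans qN.
  rewrite [in X in (_ <= X)%N](bigD1 k) // [in X in (X <= _)%N](bigD1 k) //= ffunE eqxx.
  under eq_bigr => x xk do rewrite ffunE (negbTE xk) subn0.
  by rewrite -addSn subn1 prednK.
have [j [s' pos]] := exists_Phi_gt0 s k.
have [] := Phi_gt0_decision pos; rewrite size_s.
case: j {pos} => [j /andP[kj] | _ size_s'].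
- rewrite ffunE => /leq_trans/(_ (leq_subr _ _)) qj _.
  by have /eqP := G k j kj; rewrite muln_eq0 (gtn_eqF qk) (gtn_eqF qj).
- exists s'; rewrite size_s'; apply/ffunP => x; rewrite !ffunE.
  have [->|xk] := eqVneq x k; first by rewrite subnK.
  by rewrite subn0 addn0.
Qed.

End GreedyPolicy.

Definition phi_complete (m : nat) (q : qvec m) (w : 'I_m) : option 'I_m :=
  [pick v | (v != w) && (0 < q v)%N].

Section CompleteMultipartite.

Variables (n m : nat) (p : 'I_n -> 'I_m) (adj : rel 'I_n).
Hypothesis adjE : forall i k, adj i k = (p i != p k).

Definition qproj (q : qvec n) : qvec m := [ffun w => \sum_(k | p k == w) q k]%N.

Lemma multipartite_adj_sym : ssrbool.symmetric adj.
Proof. by move=> i k; rewrite !adjE eq_sym. Qed.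

Lemma multipartite_adj_irr : irreflexive adj.
Proof. by move=> i; rewrite adjE eqxx. Qed.

Lemma greedy_qvec_part q x y : greedy_qvec adj q -> (0 < q x)%N -> (0 < q y)%N ->
  p x = p y.
Proof.
move=> G qx qy; apply/eqP/negP => /negP; rewrite -adjE => /G/eqP.
by rewrite muln_eq0 (gtn_eqF qx) (gtn_eqF qy).
Qed.

Lemma qproj_gt0 q w : (0 < qproj q w)%N = [exists x, (p x == w) && (0 < q x)%N].
Proof.
rewrite ffunE lt0n sum_nat_eq0 negb_forall.
by apply: eq_existsb => x; rewrite negb_imply lt0n.
Qed.

Lemma qproj_qzero : qproj (qzero n) = qzero m.
Proof. by apply/ffunP => w; rewrite !ffunE big1 // => k _; rewrite ffunE. Qed.

Lemma sum_fibre_indicator (i : 'I_n) (w : 'I_m) :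
  (\sum_(k | p k == w) (k == i))%N = (p i == w).
Proof.
have [<-|piw] := eqVneq (p i) w.
  by rewrite (bigD1 i) //= eqxx big1 // => k /andP[_ /negbTE->].
rewrite big1 // => k /eqP pk; case: eqVneq => // ki.
by rewrite -ki pk eqxx in piw.
Qed.

Lemma qproj_qupd q i j : greedy_decision adj q i j ->
  qproj (qupd q i j) = qupd (qproj q) (p i) (omap p j).
Proof.
case: j => [j /andP[_ qj] | _] /=; apply/ffunP => w; rewrite !ffunE;
  under eq_bigr do rewrite ffunE; rewrite [w == _]eq_sym; last first.
  by rewrite big_split /= sum_fibre_indicator.
apply: (@addIn (p j == w)); rewrite -{1}(sum_fibre_indicator j) -big_split /= subnK.
  by apply: eq_bigr => k _; apply: subnK; case: eqP => [->|].
have [<-|//] := eqVneq (p j) w.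
by rewrite (bigD1 j) //= (leq_trans qj (leq_addr _ _)).
Qed.

Lemma phi_complete_qproj q i j : greedy_qvec adj q -> greedy_decision adj q i j ->
  omap p j = phi_complete (qproj q) (p i).
Proof.
move=> G; rewrite /phi_complete; case: pickP => [v /andP[vi] | nopick].
  rewrite qproj_gt0 => /existsP[x /andP[/eqP pxv qx]]; rewrite -pxv in vi *.
  case: j => [j /andP[_ qj] | none] /=; first by rewrite (greedy_qvec_part G qj qx).
  by move: qx; rewrite none ?ltnn // adjE eq_sym.
case: j => [j /andP[ij qj] | _] //=.
have /negbT := nopick (p j); rewrite eq_sym -adjE ij qproj_gt0 /=.
by move/existsPn/(_ j); rewrite eqxx qj.
Qed.

Variables (R : realType) (S : countType) (size : S -> qvec n) (empty : S).
Variable Phi : S -> 'I_n -> option 'I_n -> S -> R.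
Hypotheses (adaptedPhi : adapted adj size empty Phi) (greedyPhi : greedy adj size Phi).

Let size_greedy := greedy_qvec_size adaptedPhi greedyPhi
  multipartite_adj_sym multipartite_adj_irr.
Let Phi_decision := Phi_gt0_decision adaptedPhi greedyPhi.

Lemma det_size_based_phi_complete phi : det_size_based size Phi phi ->
  forall q i, greedy_qvec adj q -> omap p (phi q i) = phi_complete (qproj q) (p i).
Proof.
move=> [_ Phi_det] q i /(greedy_qvec_is_size adaptedPhi greedyPhi) [s <-].
have [j [s' pos]] := exists_Phi_gt0 adaptedPhi s i.
have [decision _] := Phi_decision pos.
move: pos; rewrite Phi_det; case: ifP => [/andP[/eqP <- _] _ | _]; last by rewrite ltxx.
exact: phi_complete_qproj (size_greedy s) decision.
Qed.

Lemma esum_Phi_phi_complete s i :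
  (\esum_(s' in [set: S])
     ((\sum_(j | omap p j == phi_complete (qproj (size s)) (p i)) Phi s i j s')%:E))%E
  = 1%E.
Proof.
have [_ sum1 _ _ _] := adaptedPhi; rewrite -(sum1 s i); apply: eq_esum => s' _.
congr EFin; rewrite big_mkcond; apply: eq_bigr => j _; case: eqP => // not_greedy.
apply/esym/eqP; rewrite (Phi_eq0 adaptedPhi); apply/negP => pos.
have [decision _] := Phi_decision pos.
exact/not_greedy/(phi_complete_qproj (size_greedy s) decision).
Qed.

Lemma qproj_qdet (I : nat -> 'I_n) t (path : nat -> S) : path 0%N = empty ->
  (forall u, (u < t)%N -> 0 < \sum_j Phi (path u) (I u) j (path u.+1)) ->
  qproj (size (path t)) = qdet (@phi_complete m) (fun u => p (I u)) t.
Proof.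
have [_ _ _ [size_empty _] _] := adaptedPhi.
move=> path0; elim: t => [_|t IH pos] /=; first by rewrite path0 size_empty qproj_qzero.
have [j Phi_pos] : exists j, 0 < Phi (path t) (I t) j (path t.+1).
  have := pos t (ltnSn t); rewrite lt0r psumr_neq0 => [/andP[/hasP[j _ jpos] _]|j _].
    by exists j.
  exact: (Phi_ge0 adaptedPhi).
have [decision ->] := Phi_decision Phi_pos.
rewrite qproj_qupd // (phi_complete_qproj (size_greedy _) decision) IH // => u ut.
exact: pos u (ltnW ut).
Qed.

End CompleteMultipartite.

Lemma projnode_val (i : 'I_4) : projnode i = (if i == 3 :> nat then 0 else i)%N :> nat.
Proof.
rewrite /projnode; case: ifP => [//|/negbT i3].
by rewrite inordK // ltn_neqAle i3 -ltnS ltn_ord.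
Qed.

Lemma adjD_projnode i k : adjD i k = (projnode i != projnode k).
Proof.
rewrite -val_eqE /= !projnode_val.
by case: i k => [[|[|[|[|//]]]] ?] [[|[|[|[|//]]]] ?].
Qed.

Lemma projq_qproj : projq = qproj projnode.
Proof.
apply/funext => q; apply/ffunP => w; rewrite !ffunE big_mkcond !big_ord_recr big_ord0 /=.
rewrite -!val_eqE /= !projnode_val /=.
case: w => [[|[|[|//]]] w3]; rewrite /= ?add0n ?addn0;
  [congr (q _ + q _) | congr (q _) | congr (q _)]; apply: val_inj; rewrite /= ?inordK //.
Qed.

Theorem proposition6p6 (R : realType) (S : countType) (size : S -> qvec 4)
  (empty : S) (Phi : S -> 'I_4 -> option 'I_4 -> S -> R) :
  adapted adjD size empty Phi ->
  greedy adjD size Phi ->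
  [/\ (* (i) *)
      (forall phi : qvec 4 -> 'I_4 -> option 'I_4,
         det_size_based size Phi phi ->
         forall q i, greedy_qvec adjD q ->
           projdec (phi q i) = phiGreK3 (projq q) (projnode i)),
      (* (ii) *)
      (forall s i,
         (\esum_(s' in [set: S])
            ((\sum_(j : option 'I_4 |
                      projdec j == phiGreK3 (projq (size s)) (projnode i))
                Phi s i j s')%:E))%E = 1%E)
    & (* (iii): almost surely, i.e. along every state path of positive
         probability, <Q_t> = (Q_Gre)_t *)
      (forall (I : nat -> 'I_4) (t : nat) (path : nat -> S),
         path 0%N = empty ->
         (forall u, (u < t)%N -> 0 < \sum_(j : option 'I_4) Phi (path u) (I u) j (path u.+1)) ->
         projq (size (path t)) = qdet phiGreK3 (fun u => projnode (I u)) t)].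
Proof.
move=> adaptedPhi greedyPhi; rewrite projq_qproj; split.
- exact: (det_size_based_phi_complete adjD_projnode adaptedPhi greedyPhi).
- exact: (esum_Phi_phi_complete adjD_projnode adaptedPhi greedyPhi).
- exact: (qproj_qdet adjD_projnode adaptedPhi greedyPhi).
Qed.
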